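(* Let $R$ be a commutative ring with unit, $Q=(V,E,X,s,t,l)$ a labelled quiver, and let $f,g,h\in R\langle X\rangle$ be such that $f$ is compatible with $Q$, $g$ is uniformly compatible with $Q$, and $h$ can be obtained from $f$ by a rewriting step using $g$, i.e. $h=f+\lambda agb$ for some $\lambda\in R$ and $a,b\in\langle X\rangle$ with $a m_g b = m_f$ for some $m_g\in\operatorname{supp}(g)$, $m_f\in\operatorname{supp}(f)$. Then $h$ is compatible, $a$, $b$ and $agb$ are uniformly compatible with $Q$, and $\sigma(h)\supseteq\sigma(f)$ and $\sigma(agb)\supseteq\sigma(f)$. Moreover, if in addition $f$ is uniformly compatible, then $h$ is uniformly compatible and $\sigma(agb)=\sigma(f)$.
   Context: $R\langle X\rangle$ is the free algebra of noncommutative polynomials over $R$ in indeterminates $X$, with monomials the words in $\langle X\rangle$ (including the empty word $1$); $\operatorname{supp}(f)$ is the set of monomials with nonzero coefficient. A rewriting step: for $f,g$ such that some $m_g\in\operatorname{supp}(g)$ divides some $m_f\in\operatorname{supp}(f)$, i.e. $m_f=am_gb$ with $a,b\in\langle X\rangle$, and $\lambda\in R$, the polynomial $f+\lambda agb$ is obtained from $f$ by a rewriting step using $g$. A labelled quiver $Q=(V,E,X,s,t,l)$ has vertices $V$, edges $E$, source/target maps $s,t:E\to V$ and labelling $l:E\to X$. A nonempty path $p=e_n\cdots e_1$ (with $s(e_{i+1})=t(e_i)$) has label $l(e_n)\cdots l(e_1)$, source $s(e_1)$, target $t(e_n)$; each vertex $v$ has an empty path with label $1$ and source and target $v$. For a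 monomial $m$, $\sigma(m)=\{(s(p),t(p)) : p \text{ a path with } l(p)=m\}$; for a polynomial $f$, $\sigma(f)=\bigcap_{m\in\operatorname{supp}(f)}\sigma(m)$. $f$ is compatible with $Q$ if $\sigma(f)\neq\emptyset$, and uniformly compatible if it is compatible and all $m\in\operatorname{supp}(f)$ have the same set $\sigma(m)$. *)

From HB Require Import structures.
From mathcomp Require Import all_boot all_algebra.
Set Implicit Arguments. Unset Strict Implicit. Unset Printing Implicit Defensive.
Import GRing.Theory.
Local Open Scope ring_scope.

(* Noncommutative polynomials R<X>: finitely supported coefficient functions
   on words (monomials) seq X; the empty word [::] is the monomial 1. *)
Section FreeAlg.
Variables (R : comNzRingType) (X : eqType).

Definition finsupp_fun (c : seq X -> R) :=
  exists s : seq (seq X), forall w, c w != 0 -> w \in s.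

Definition ncpoly := { c : seq X -> R | finsupp_fun c }.

Definition coef (f : ncpoly) : seq X -> R := proj1_sig f.

Definition supp (f : ncpoly) (m : seq X) : Prop := coef f m != 0.

Lemma ncadd_fin (f g : ncpoly) : finsupp_fun (fun w => coef f w + coef g w).
Proof.
case: f => cf [sf Hf]; case: g => cg [sg Hg]; exists (sf ++ sg) => w /= Hw.
rewrite mem_cat; case: (boolP (cf w == 0)) => [/eqP H0|/Hf -> //].
by rewrite orbC Hg //; move: Hw; rewrite H0 add0r.
Qed.
Definition ncadd (f g : ncpoly) : ncpoly := exist _ _ (ncadd_fin f g).

Lemma ncscale_fin (lam : R) (f : ncpoly) : finsupp_fun (fun w => lam * coef f w).
Proof.
case: f => cf [sf Hf]; exists sf => w /= Hw; apply: Hf.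
by apply: contra Hw => /eqP ->; rewrite mulr0.
Qed.
Definition ncscale (lam : R) (f : ncpoly) : ncpoly := exist _ _ (ncscale_fin lam f).

Lemma ncmono_fin (m : seq X) : finsupp_fun (fun w => if w == m then 1 else 0).
Proof. exists [:: m] => w; rewrite inE; by case: (w == m); rewrite ?eqxx. Qed.
Definition ncmono (m : seq X) : ncpoly := exist _ _ (ncmono_fin m).

(* the product a * g * b of monomials a, b with the polynomial g:
   the coefficient of a word w is g u if w = a u b, and 0 otherwise. *)
Definition mid (a b w : seq X) : seq X :=
  take (size w - (size a + size b)) (drop (size a) w).

Definition sandwich_coef (a : seq X) (g : ncpoly) (b : seq X) (w : seq X) : R :=
  if w == a ++ mid a b w ++ b then coef g (mid a b w) else 0.

Lemma sandwich_fin a g b : finsupp_fun (sandwich_coef a g b).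
Proof.
case: g => cg [sg Hg]; exists (map (fun u => a ++ u ++ b) sg) => w.
rewrite /sandwich_coef /=; case: (w =P _) => [E|_]; last by rewrite eqxx.
by move=> /Hg H; rewrite E; apply: map_f.
Qed.
Definition sandwich a g b : ncpoly := exist _ _ (sandwich_fin a g b).

End FreeAlg.

Section Quiver.
Variables (V E : Type) (X : eqType) (s t : E -> V) (l : E -> X).

(* A nonempty path e_n ... e_1 (s(e_{i+1}) = t(e_i)) has label
   l(e_n) ... l(e_1), source s(e_1), target t(e_n); it is built by
   prepending (on the left) an edge e with s(e) = target of the previous path. *)
Inductive walk : seq X -> V -> V -> Prop :=
| walk_nil v : walk [::] v v
| walk_cons e m u : walk m u (s e) -> walk (l e :: m) u (t e).

Definition sigma_mono (m : seq X) (p : V * V) : Prop := walk m p.1 p.2.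

Variable R : comNzRingType.

Definition sigma (f : ncpoly R X) (p : V * V) : Prop :=
  forall m, supp f m -> sigma_mono m p.

Definition compatible (f : ncpoly R X) : Prop := exists p, sigma f p.

Definition unif_compatible (f : ncpoly R X) : Prop :=
  compatible f /\
  forall m1 m2, supp f m1 -> supp f m2 -> forall p, sigma_mono m1 p <-> sigma_mono m2 p.

End Quiver.

(* Since g is uniformly compatible, every monomial a u b with u in supp(g)
   admits exactly the same (source, target) pairs as m_f = a m_g b: walks
   split along concatenation, and the middle piece can be traded between u
   and m_g.  Hence every monomial of agb, and of h when f is uniform, is
   equivalent to m_f, and sigma(agb) = sigma(m_f) contains sigma(f). *)
From mathcomp Require Import all_boot all_algebra.
From mathcomp Require Import zify.
Set Implicit Arguments. Unset Strict Implicit. Unset Printing Implicit Defensive.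
Import GRing.Theory.
Local Open Scope ring_scope.

Section Walks.
Variables (V E : Type) (X : eqType) (s t : E -> V) (l : E -> X).

Lemma walk_cat (m1 m2 : seq X) u w :
  walk s t l (m1 ++ m2) u w <->
  exists v, walk s t l m2 u v /\ walk s t l m1 v w.
Proof.
split.
  elim: m1 w => [|x m1 IH] w /= W; first by exists w; split=> //; constructor.
  inversion W as [|e m u0 W' Ex Em Ew]; subst.
  by have [v [W2 W1]] := IH _ W'; exists v; split=> //; constructor.
move=> [v [W2 W1]]; elim: W1 W2 => [//|e m v' _ IH W2] /=.
by constructor; apply: IH.
Qed.

Lemma sigma_mono_catl (m1 m2 : seq X) p :
  sigma_mono s t l (m1 ++ m2) p -> exists q, sigma_mono s t l m1 q.
Proof. by move/walk_cat=> [v [_ W1]]; exists (v, p.2). Qed.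

Lemma sigma_mono_catr (m1 m2 : seq X) p :
  sigma_mono s t l (m1 ++ m2) p -> exists q, sigma_mono s t l m2 q.
Proof. by move/walk_cat=> [v [W2 _]]; exists (p.1, v). Qed.

Lemma walk_cat_mid (a m m' b : seq X) u w :
  (forall u' w', walk s t l m u' w' -> walk s t l m' u' w') ->
  walk s t l (a ++ m ++ b) u w -> walk s t l (a ++ m' ++ b) u w.
Proof.
move=> mm' /walk_cat [v [/walk_cat [v' [Wb Wm]] Wa]].
by apply/walk_cat; exists v; split=> //; apply/walk_cat; exists v'; split; auto.
Qed.

Lemma sigma_mono_cat_mid (a m m' b : seq X) :
  (forall p, sigma_mono s t l m p <-> sigma_mono s t l m' p) ->
  forall p, sigma_mono s t l (a ++ m ++ b) p <-> sigma_mono s t l (a ++ m' ++ b) p.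
Proof.
move=> mm' p; split; apply: walk_cat_mid => u w; rewrite /sigma_mono in mm';
  by move/(mm' (u, w)).
Qed.

End Walks.

Section Supports.
Variables (R : comNzRingType) (X : eqType).

Lemma mid_cat (a u b : seq X) : mid a b (a ++ u ++ b) = u.
Proof.
rewrite /mid drop_size_cat //.
have -> : (size (a ++ u ++ b) - (size a + size b))%N = size u.
  by rewrite !size_cat; lia.
by rewrite take_size_cat.
Qed.

Lemma supp_sandwich (a b : seq X) (g : ncpoly R X) w :
  supp (sandwich a g b) w <-> exists2 u, w = a ++ u ++ b & supp g u.
Proof.
rewrite /supp /= /sandwich_coef; split.
  by case: ifP => [/eqP Ew gw|_]; [exists (mid a b w) | rewrite eqxx].
by move=> [u -> gu]; rewrite mid_cat eqxx.
Qed.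

Lemma supp_ncmono (a w : seq X) : supp (ncmono R a) w <-> w = a.
Proof.
rewrite /supp /=; split; first by case: ifP => [/eqP|]; rewrite ?eqxx.
by move=> ->; rewrite eqxx oner_neq0.
Qed.

Lemma supp_ncaddZ (f k : ncpoly R X) (lam : R) w :
  supp (ncadd f (ncscale lam k)) w -> supp f w \/ supp k w.
Proof.
rewrite /supp /=; have [-> | ] := eqVneq (coef f w) 0; last by left.
have [-> | ] := eqVneq (coef k w) 0; last by right.
by rewrite mulr0 addr0 eqxx.
Qed.

End Supports.

Section Compatibility.
Variables (V E : Type) (X : eqType) (s t : E -> V) (l : E -> X).
Variable R : comNzRingType.

Definition uniform_at (f : ncpoly R X) (m0 : seq X) : Prop :=
  forall m, supp f m -> forall p, sigma_mono s t l m p <-> sigma_mono s t l m0 p.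

Lemma unif_compatible_at (f : ncpoly R X) m0 :
  compatible s t l f -> uniform_at f m0 -> unif_compatible s t l f.
Proof. by move=> fc f_m0; split=> // m1 m2 /f_m0 m1m0 /f_m0 m2m0 p; rewrite m1m0 m2m0. Qed.

Lemma unif_compatible_uniform_at (f : ncpoly R X) m0 :
  unif_compatible s t l f -> supp f m0 -> uniform_at f m0.
Proof. by move=> [_ fu] f_m0 m fm; apply: fu. Qed.

Lemma sigma_uniform_at (f : ncpoly R X) m0 :
  uniform_at f m0 -> supp f m0 ->
  forall p, sigma s t l f p <-> sigma_mono s t l m0 p.
Proof.
move=> f_m0 fm0 p; split; first by apply.
by move=> W m /f_m0 ->.
Qed.

Lemma uniform_at_sandwich (a b : seq X) (g : ncpoly R X) mg :
  uniform_at g mg -> uniform_at (sandwich a g b) (a ++ mg ++ b).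
Proof. by move=> g_mg _ /supp_sandwich [u -> /g_mg]; apply: sigma_mono_cat_mid. Qed.

Lemma uniform_at_ncaddZ (f k : ncpoly R X) (lam : R) m0 :
  uniform_at f m0 -> uniform_at k m0 -> uniform_at (ncadd f (ncscale lam k)) m0.
Proof. by move=> f_m0 k_m0 m /supp_ncaddZ [/f_m0 | /k_m0]. Qed.

Lemma sigma_ncaddZ (f k : ncpoly R X) (lam : R) p :
  sigma s t l f p -> sigma s t l k p -> sigma s t l (ncadd f (ncscale lam k)) p.
Proof. by move=> fp kp m /supp_ncaddZ [/fp | /kp]. Qed.

Lemma unif_compatible_ncmono (c : seq X) :
  (exists p, sigma_mono s t l c p) -> unif_compatible s t l (ncmono R c).
Proof.
move=> [p cp]; split; first by exists p => m /supp_ncmono ->.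
by move=> m1 m2 /supp_ncmono -> /supp_ncmono ->.
Qed.

End Compatibility.

Theorem lemma3p10 (R : comNzRingType) (V E : Type) (X : eqType)
  (s t : E -> V) (l : E -> X)
  (f g : ncpoly R X) (lam : R) (a b mg mf : seq X) :
  compatible s t l f ->
  unif_compatible s t l g ->
  supp g mg -> supp f mf -> a ++ mg ++ b = mf ->
  let agb := sandwich a g b in
  let h := ncadd f (ncscale lam agb) in
  (compatible s t l h /\
   unif_compatible s t l (ncmono R a) /\
   unif_compatible s t l (ncmono R b) /\
   unif_compatible s t l agb /\
   (forall p, sigma s t l f p -> sigma s t l h p) /\
   (forall p, sigma s t l f p -> sigma s t l agb p)) /\
  (unif_compatible s t l f ->
     unif_compatible s t l h /\ (forall p, sigma s t l agb p <-> sigma s t l f p)).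
Proof.
move=> [p0 f_p0] g_unif g_mg f_mf def_mf agb h.
have agb_mf : uniform_at s t l agb mf.
  by rewrite -def_mf; apply/uniform_at_sandwich/unif_compatible_uniform_at.
have agb_supp_mf : supp agb mf by apply/supp_sandwich; exists mg.
have sigma_agb := sigma_uniform_at agb_mf agb_supp_mf.
have f_agb p : sigma s t l f p -> sigma s t l agb p.
  by move=> fp; apply/sigma_agb/fp.
have f_h p : sigma s t l f p -> sigma s t l h p.
  by move=> fp; apply: sigma_ncaddZ (f_agb p fp).
have walk_mf := f_p0 _ f_mf; rewrite -def_mf in walk_mf.
split.
  split; first by exists p0; apply: f_h.
  split; first exact/unif_compatible_ncmono/sigma_mono_catl/walk_mf.
  rewrite catA in walk_mf.
  split; first exact/unif_compatible_ncmono/sigma_mono_catr/walk_mf.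
  split; last by split.
  by apply: unif_compatible_at agb_mf; exists p0; apply: f_agb.
move=> f_unif; have f_at_mf := unif_compatible_uniform_at f_unif f_mf.
split.
  apply: (unif_compatible_at (m0 := mf)); first by exists p0; apply: f_h.
  exact: uniform_at_ncaddZ.
by move=> p; rewrite sigma_agb (sigma_uniform_at f_at_mf f_mf).
Qed.
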